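(* (a) $\mathbf{Ck}$-tableaux and $\mathbf{CK}$-tableaux are sound for Segerberg models: if a finite set of formulas $\{\theta_1,\dots,\theta_n\}$ is satisfiable in some Segerberg model, then no $\mathbf{Ck}$- or $\mathbf{CK}$-tableau with assumptions $1:\theta_1,\dots,1:\theta_n$ is closed. (b) $\mathbf{Vc}$-tableaux are sound for $\mathbf{VC}$-models: if $\{\theta_1,\dots,\theta_n\}$ is satisfiable in some $\mathbf{VC}$-model, then no $\mathbf{Vc}$-tableau with assumptions $1:\theta_1,\dots,1:\theta_n$ is closed.
   Context: Formulas: built from propositional variables and the constant $\bot$ using $\lnot$, the binary connectives $\supset,\land,\lor$, and two binary conditional operators $[\phi]\psi$ and $\langle\phi\rangle\psi$ (treated as primitive by tableau rules). $\top$ abbreviates $\lnot\bot$. Segerberg model: $M=\langle U,P,R,V\rangle$ with $U\neq\emptyset$, $P\subseteq\wp(U)$, $R:P\to\wp(U\times U)$, $V:\mathrm{Var}\to P$, such that $\emptyset,U\in P$; $P$ is closed under complement, binary intersection and union; and for $S,T\in P$, $\{x\in U\mid R_S(x)\subseteq T\}\in P$, where $R_S=R(S)$ and $R_S(x)=\{y\mid (x,y)\in R_S\}$. Truth: $M,x\not\models\bot$; $M,x\models p$ iff $x\in V(p)$; Boolean connectives as usual; $M,x\models[\phi]\psi$ iff $M,y\models\psi$ for all $y\in R_\phi(x)$; $M,x\models\langle\phi\rangle\psi$ iff $M,y\models\psi$ for some $y\in R_\phi(x)$; here $\|\phi\|=\{x\mid M,x\models\phi\}$ and $R_\phi=R_{\|\phi\|}$.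 A set of formulas is satisfiable in $M$ if all its members are true at a common world. A $\mathbf{VC}$-model is a Segerberg model such that for all $S,T\in P$ and $x\in U$: (1) $R_S(x)\subseteq S$; (2) $R_S(x)\cap T\neq\emptyset\Rightarrow R_T(x)\neq\emptyset$; (3) $R_U(x)\subseteq\{x\}$; (4) $x\in R_U(x)$; (5) $R_S(x)\cap T\subseteq R_{S\cap T}(x)$; (6) $R_S(x)\cap T\neq\emptyset\Rightarrow R_{S\cap T}(x)\subseteq R_S(x)\cap T$. Tableaux: indices are positive integers. Prefixed formulas are $i:\phi$ and $i\,r_\phi\,j$. A tableau with assumptions $A$ (a set of prefixed formulas) is a finite downward-branching tree labelled by prefixed formulas, each either in $A$ or obtained by applying a branch extension rule to prefixed formulas on its branch; non-branching rules append their conclusions, branching rules split the branch into one child per alternative, each alternative appending its listed conclusions. A branch is closed if it contains $i:\chi$ and $i:\lnot\chi$, or $i:\bot$; a tableau is closed if all branches are closed. Basic rules: from $i:\phi\land\psi$ add $i:\phi,i:\psi$; from $i:\lnot(\phi\land\psi)$ branch $i:\lnot\phi\mid i:\lnot\psi$; from $i:\phi\lor\psi$ branch $i:\phi\mid i:\psi$; from $i:\lnot(\phi\lor\psi)$ add $i:\lnot\phi,i:\lnot\psi$; from $i:\phi\supset\psi$ branch $i:\lnot\phi\mid i:\psi$; from $i:\lnot(\phi\supset\psi)$ add $i:\phi,i:\lnot\psi$; from $i:\lnot\lnot\phi$ add $i:\phi$; ($\Box$) from $i:[\phi]\psi$ and $i\,r_\phi\,j$ add $j:\psi$; ($\lnot\Box$)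 from $i:\lnot[\phi]\psi$ add $i\,r_\phi\,j$ and $j:\lnot\psi$, $j$ new; ($\Diamond$) from $i:\langle\phi\rangle\psi$ add $i\,r_\phi\,j$ and $j:\psi$, $j$ new; ($\lnot\Diamond$) from $i:\lnot\langle\phi\rangle\psi$ and $i\,r_\phi\,j$ add $j:\lnot\psi$. (cut) for any index $i$ already on the branch and any $\phi$, branch $i:\phi\mid i:\lnot\phi$. (ea) from $i\,r_\phi\,j$ and any $\psi$, branch ($k:\lnot\phi$, $k:\psi$) $\mid$ ($k:\phi$, $k:\lnot\psi$) $\mid$ $i\,r_\psi\,j$, $k$ new. (R1) from $i\,r_\phi\,j$ add $j:\phi$. (R2) from $j:\psi$ and $i\,r_\phi\,j$ add $i\,r_\psi\,k$, $k$ new. (R3) from $i:\phi$, $j:\lnot\phi$, $i\,r_\top\,j$ add $j:\phi$. (R4) for any index $i$ on the branch add $i\,r_\top\,i$. (R5) from $j:\psi$ and $i\,r_\phi\,j$ add $i\,r_{\phi\land\psi}\,j$. (R6) from $j:\psi$, $i\,r_\phi\,j$, $i\,r_{\phi\land\psi}\,k$ add $k:\psi$ and $i\,r_\phi\,k$. Systems: $\mathbf{Ck}$ = basic rules; $\mathbf{CK}$ = basic rules + cut + ea; $\mathbf{Vc}$ = basic rules + R1–R6. *)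

From Stdlib Require Import List.
Import ListNotations.

Inductive form : Type :=
| FVar : nat -> form
| FBot : form
| FNeg : form -> form
| FImp : form -> form -> form
| FAnd : form -> form -> form
| FOr  : form -> form -> form
| FBox : form -> form -> form   (* [phi] psi *)
| FDia : form -> form -> form.  (* <phi> psi *)

Definition FTop : form := FNeg FBot.

(* ---------- Segerberg models ----------
   Subsets of U are predicates U -> Prop; P is the collection of admissible
   sets; R S is the relation R_S (only ever used on S in P). *)
Record SegModel : Type := {
  U : Type;
  P : (U -> Prop) -> Prop;
  R : (U -> Prop) -> U -> U -> Prop;
  V : nat -> U -> Prop;
  U_nonempty : inhabited U;
  P_empty : P (fun _ => False);
  P_full : P (fun _ => True);
  P_compl : forall S, P S -> P (fun x => ~ S x);
  P_inter : forall S T, P S -> P T -> P (fun x => S x /\ T x);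
  P_union : forall S T, P S -> P T -> P (fun x => S x \/ T x);
  P_box : forall S T, P S -> P T -> P (fun x => forall y, R S x y -> T y);
  V_in_P : forall p, P (V p)
}.

Fixpoint sat (M : SegModel) (x : U M) (f : form) {struct f} : Prop :=
  match f with
  | FVar p => V M p x
  | FBot => False
  | FNeg a => ~ sat M x a
  | FImp a b => sat M x a -> sat M x b
  | FAnd a b => sat M x a /\ sat M x b
  | FOr a b => sat M x a \/ sat M x b
  | FBox a b => forall y, R M (fun z => sat M z a) x y -> sat M y b
  | FDia a b => exists y, R M (fun z => sat M z a) x y /\ sat M y b
  end.

Definition satisfiable_in (M : SegModel) (G : list form) : Prop :=
  exists x : U M, forall f, In f G -> sat M x f.

Definition VC_model (M : SegModel) : Prop :=
  forall (S T : U M -> Prop) (x : U M), P M S -> P M T ->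
    (forall y, R M S x y -> S y) /\
    ((exists y, R M S x y /\ T y) -> exists y, R M T x y) /\
    (forall y, R M (fun _ => True) x y -> y = x) /\
    R M (fun _ => True) x x /\
    (forall y, R M S x y -> T y -> R M (fun z => S z /\ T z) x y) /\
    ((exists y, R M S x y /\ T y) ->
       forall y, R M (fun z => S z /\ T z) x y -> R M S x y /\ T y).

Inductive pform : Type :=
| PF : nat -> form -> pform            (* i : phi *)
| PR : nat -> form -> nat -> pform.    (* i r_phi j *)

Definition pf_indices (a : pform) : list nat :=
  match a with PF i _ => [i] | PR i _ j => [i; j] end.

Definition branch_indices (br : list pform) : list nat :=
  flat_map pf_indices br.

Definition on_branch (i : nat) (br : list pform) : Prop := In i (branch_indices br).

(* indices are positive integers; a new index does not occur on the branch *)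
Definition new_index (k : nat) (br : list pform) : Prop :=
  0 < k /\ ~ on_branch k br.

Inductive system : Type := Ck | CK | Vc.

(* rule_app sys br alts : some rule of sys applies to prefixed formulas on the
   branch br, and alts lists the alternatives (one per child), each being the
   list of conclusions appended on that child. *)
Inductive rule_app (sys : system) (br : list pform) : list (list pform) -> Prop :=
| r_and : forall i a b, In (PF i (FAnd a b)) br ->
    rule_app sys br [[PF i a; PF i b]]
| r_nand : forall i a b, In (PF i (FNeg (FAnd a b))) br ->
    rule_app sys br [[PF i (FNeg a)]; [PF i (FNeg b)]]
| r_or : forall i a b, In (PF i (FOr a b)) br ->
    rule_app sys br [[PF i a]; [PF i b]]
| r_nor : forall i a b, In (PF i (FNeg (FOr a b))) br ->
    rule_app sys br [[PF i (FNeg a); PF i (FNeg b)]]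
| r_imp : forall i a b, In (PF i (FImp a b)) br ->
    rule_app sys br [[PF i (FNeg a)]; [PF i b]]
| r_nimp : forall i a b, In (PF i (FNeg (FImp a b))) br ->
    rule_app sys br [[PF i a; PF i (FNeg b)]]
| r_nneg : forall i a, In (PF i (FNeg (FNeg a))) br ->
    rule_app sys br [[PF i a]]
| r_box : forall i j a b, In (PF i (FBox a b)) br -> In (PR i a j) br ->
    rule_app sys br [[PF j b]]
| r_nbox : forall i j a b, In (PF i (FNeg (FBox a b))) br -> new_index j br ->
    rule_app sys br [[PR i a j; PF j (FNeg b)]]
| r_dia : forall i j a b, In (PF i (FDia a b)) br -> new_index j br ->
    rule_app sys br [[PR i a j; PF j b]]
| r_ndia : forall i j a b, In (PF i (FNeg (FDia a b))) br -> In (PR i a j) br ->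
    rule_app sys br [[PF j (FNeg b)]]
| r_cut : sys = CK -> forall i a, on_branch i br ->
    rule_app sys br [[PF i a]; [PF i (FNeg a)]]
| r_ea : sys = CK -> forall i j k a b, In (PR i a j) br -> new_index k br ->
    rule_app sys br [[PF k (FNeg a); PF k b]; [PF k a; PF k (FNeg b)]; [PR i b j]]
| r_R1 : sys = Vc -> forall i j a, In (PR i a j) br ->
    rule_app sys br [[PF j a]]
| r_R2 : sys = Vc -> forall i j k a b, In (PF j b) br -> In (PR i a j) br ->
    new_index k br ->
    rule_app sys br [[PR i b k]]
| r_R3 : sys = Vc -> forall i j a, In (PF i a) br -> In (PF j (FNeg a)) br ->
    In (PR i FTop j) br ->
    rule_app sys br [[PF j a]]
| r_R4 : sys = Vc -> forall i, on_branch i br ->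
    rule_app sys br [[PR i FTop i]]
| r_R5 : sys = Vc -> forall i j a b, In (PF j b) br -> In (PR i a j) br ->
    rule_app sys br [[PR i (FAnd a b) j]]
| r_R6 : sys = Vc -> forall i j k a b, In (PF j b) br -> In (PR i a j) br ->
    In (PR i (FAnd a b) k) br ->
    rule_app sys br [[PF k b; PR i a k]].

Definition branch_closed (br : list pform) : Prop :=
  (exists i c, In (PF i c) br /\ In (PF i (FNeg c)) br) \/
  (exists i, In (PF i FBot) br).

(* closes sys A br : there is a finite tree extending the branch br (listed
   newest-first) every node of which is an assumption from A or a conclusion of a
   rule of sys applied to formulas on its branch, all of whose branches are
   closed. *)
Inductive closes (sys : system) (A : list pform) : list pform -> Prop :=
| cl_closed : forall br, branch_closed br -> closes sys A br
| cl_assm : forall br a, In a A -> closes sys A (a :: br) -> closes sys A br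
| cl_rule : forall br alts, rule_app sys br alts ->
    (forall alt, In alt alts -> closes sys A (alt ++ br)) -> closes sys A br.

Definition closed_tableau_exists (sys : system) (A : list pform) : Prop :=
  closes sys A [].

Definition assumptions (thetas : list form) : list pform :=
  map (fun t => PF 1 t) thetas.

(* Let x0 be a world of M satisfying the assumptions.  A map f from indices to
   worlds with f 1 = x0 realizes a branch when every i : phi on it holds at f i
   and every i r_phi j is an R_phi-edge from f i to f j.  Each rule has a child
   that is realized again, by f itself or by f updated at the fresh index (for
   Vc the VC conditions apply to R_phi because truth sets lie in P); so some
   branch of every tableau stays realized, and a realized branch is open. *)

From Stdlib Require Import List Classical FunctionalExtensionality PropExtensionality PeanoNat.
Import ListNotations.

Lemma pred_ext {A : Type} (S T : A -> Prop) : (forall x, S x <-> T x) -> S = T.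
Proof.
  intros H. extensionality x. apply propositional_extensionality, H.
Qed.

Lemma pred_eq_or_differ {A : Type} (S T : A -> Prop) :
  S = T \/ exists x, ~ (S x <-> T x).
Proof.
  destruct (classic (forall x, S x <-> T x)) as [E | NE].
  - left. now apply pred_ext.
  - right. now apply not_all_ex_not.
Qed.

Definition update {X : Type} (f : nat -> X) (k : nat) (y : X) : nat -> X :=
  fun n => if Nat.eqb n k then y else f n.

Lemma update_eq {X : Type} (f : nat -> X) k y : update f k y k = y.
Proof. unfold update. now rewrite Nat.eqb_refl. Qed.

Lemma update_neq {X : Type} (f : nat -> X) k y n : n <> k -> update f k y n = f n.
Proof. intros H. unfold update. now destruct (Nat.eqb_spec n k). Qed.

Lemma on_branch_of_in a br i : In a br -> In i (pf_indices a) -> on_branch i br.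
Proof. intros Ha Hi. apply in_flat_map. eauto. Qed.

Lemma on_branch_app alt br i : on_branch i br -> on_branch i (alt ++ br).
Proof.
  unfold on_branch, branch_indices. rewrite flat_map_app. intros H. apply in_or_app. auto.
Qed.

Lemma update_off_branch {X : Type} (f : nat -> X) k y br a n :
  ~ on_branch k br -> In a br -> In n (pf_indices a) -> update f k y n = f n.
Proof. intros Hk Ha Hn. apply update_neq. intros ->. eauto using on_branch_of_in. Qed.

Lemma rule_app_nil sys alts : ~ rule_app sys [] alts.
Proof. intros H. inversion H; contradiction. Qed.

Section Soundness.

Variable M : SegModel.

Local Notation truth a := (fun z : U M => sat M z a).

Lemma truth_set_admissible a : P M (truth a).
Proof.
  induction a as [p | | a IH | a1 IH1 a2 IH2 | a1 IH1 a2 IH2 | a1 IH1 a2 IH2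
                 | a1 IH1 a2 IH2 | a1 IH1 a2 IH2]; simpl.
  - apply V_in_P.
  - apply P_empty.
  - now apply P_compl.
  - replace (fun x => sat M x a1 -> sat M x a2)
      with (fun x => ~ sat M x a1 \/ sat M x a2).
    + apply P_union; [apply P_compl |]; assumption.
    + apply pred_ext. intros x. split; [tauto | apply imply_to_or].
  - now apply P_inter.
  - now apply P_union.
  - now apply P_box.
  - replace (fun x => exists y, R M (truth a1) x y /\ sat M y a2)
      with (fun x => ~ forall y, R M (truth a1) x y -> ~ sat M y a2).
    + apply P_compl, P_box; [| apply P_compl]; assumption.
    + apply pred_ext. intros x. split.
      * intros H. apply NNPP. intros Hno. apply H. intros y Hy Hs. apply Hno. eauto.
      * intros [y [Hy Hs]] H. exact (H y Hy Hs).
Qed.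

Lemma truth_top : truth FTop = (fun _ => True).
Proof. apply pred_ext. simpl. tauto. Qed.

Section VC.

Hypothesis HVC : VC_model M.

Let vc a b x := HVC (truth a) (truth b) x (truth_set_admissible a) (truth_set_admissible b).

Lemma vc_R_sub_antecedent a x y : R M (truth a) x y -> sat M y a.
Proof. destruct (vc a a x) as [Hsub _]. exact (Hsub y). Qed.

Lemma vc_R_nonempty a b x y :
  R M (truth a) x y -> sat M y b -> exists z, R M (truth b) x z.
Proof. destruct (vc a b x) as (_ & Hne & _). eauto. Qed.

Lemma vc_R_top_self x y : R M (truth FTop) x y -> y = x.
Proof. rewrite truth_top. destruct (vc FTop FTop x) as (_ & _ & Hself & _). exact (Hself y). Qed.

Lemma vc_R_top_refl x : R M (truth FTop) x x.
Proof. rewrite truth_top. destruct (vc FTop FTop x) as (_ & _ & _ & Hrefl & _). exact Hrefl. Qed.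

Lemma vc_R_and_intro a b x y :
  R M (truth a) x y -> sat M y b -> R M (truth (FAnd a b)) x y.
Proof. destruct (vc a b x) as (_ & _ & _ & _ & Hand & _). exact (Hand y). Qed.

Lemma vc_R_and_elim a b x y z :
  R M (truth a) x y -> sat M y b -> R M (truth (FAnd a b)) x z ->
  R M (truth a) x z /\ sat M z b.
Proof. destruct (vc a b x) as (_ & _ & _ & _ & _ & Hand). eauto. Qed.

End VC.

Definition pf_holds (f : nat -> U M) (a : pform) : Prop :=
  match a with
  | PF i phi => sat M (f i) phi
  | PR i phi j => R M (truth phi) (f i) (f j)
  end.

Definition realizes (f : nat -> U M) (br : list pform) : Prop := Forall (pf_holds f) br.

Lemma realizes_in f br a : realizes f br -> In a br -> pf_holds f a.
Proof. intros Hbr. now apply Forall_forall. Qed.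

Lemma realizes_update f k y br :
  ~ on_branch k br -> realizes f br -> realizes (update f k y) br.
Proof.
  intros Hk Hbr. apply Forall_forall. intros a Ha.
  pose proof (realizes_in f br a Hbr Ha) as Hh.
  destruct a as [i phi | i phi j]; simpl in *;
    rewrite !(update_off_branch f k y br _ _ Hk Ha) by (simpl; auto); exact Hh.
Qed.

Definition realizes_some_child (br : list pform) (alts : list (list pform))
    (f : nat -> U M) : Prop :=
  exists alt f', In alt alts /\ realizes f' (alt ++ br) /\
    forall n, on_branch n br -> f' n = f n.

Lemma child_by_same alt alts br f :
  In alt alts -> realizes f br -> realizes f alt -> realizes_some_child br alts f.
Proof.
  intros Hin Hbr Halt. exists alt, f. split; [assumption | split].
  - now apply Forall_app.
  - reflexivity.
Qed.

Lemma child_by_fresh alt alts br f k y :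
  In alt alts -> realizes f br -> new_index k br -> realizes (update f k y) alt ->
  realizes_some_child br alts f.
Proof.
  intros Hin Hbr [_ Hk] Halt. exists alt, (update f k y). split; [assumption | split].
  - apply Forall_app. split; [| apply realizes_update]; assumption.
  - intros n Hn. apply update_neq. congruence.
Qed.

Ltac realize_alt :=
  lazymatch goal with
  | |- realizes _ _ => unfold realizes; realize_alt
  | |- Forall _ [] => apply Forall_nil
  | |- Forall _ (_ :: _) => apply Forall_cons; [simpl | realize_alt]
  end.

Ltac premise Hbr H := apply (realizes_in _ _ _ Hbr) in H; simpl in H.

Lemma basic_rule_sound br alts f :
  rule_app Ck br alts -> realizes f br -> realizes_some_child br alts f.
Proof.
  intros Hr Hbr.
  destruct Hr as [i a b H | i a b H | i a b H | i a b H | i a b H | i a b H | i a H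
                 | i j a b H Hr | i j a b H Hj | i j a b H Hj | i j a b H Hr
                 | | | | | | | | ]; try discriminate.
  - premise Hbr H. apply (child_by_same [PF i a; PF i b]); simpl; auto.
    realize_alt; tauto.
  - premise Hbr H. destruct (classic (sat M (f i) a)).
    + apply (child_by_same [PF i (FNeg b)]); simpl; auto. realize_alt; tauto.
    + apply (child_by_same [PF i (FNeg a)]); simpl; auto. now realize_alt.
  - premise Hbr H. destruct H.
    + apply (child_by_same [PF i a]); simpl; auto. now realize_alt.
    + apply (child_by_same [PF i b]); simpl; auto. now realize_alt.
  - premise Hbr H. apply (child_by_same [PF i (FNeg a); PF i (FNeg b)]); simpl; auto.
    realize_alt; tauto.
  - premise Hbr H. destruct (classic (sat M (f i) a)).
    + apply (child_by_same [PF i b]); simpl; auto. realize_alt; tauto.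
    + apply (child_by_same [PF i (FNeg a)]); simpl; auto. now realize_alt.
  - premise Hbr H. apply imply_to_and in H as [Ha Hb].
    apply (child_by_same [PF i a; PF i (FNeg b)]); simpl; auto. now realize_alt.
  - premise Hbr H. apply (child_by_same [PF i a]); simpl; auto.
    realize_alt. now apply NNPP.
  - premise Hbr H. premise Hbr Hr.
    apply (child_by_same [PF j b]); simpl; auto. realize_alt. auto.
  - pose proof (realizes_in _ _ _ Hbr H) as Hnbox. simpl in Hnbox.
    apply not_all_ex_not in Hnbox as [y Hy]. apply imply_to_and in Hy as [Hy Hb].
    apply (child_by_fresh [PR i a j; PF j (FNeg b)] _ _ _ j y); simpl; auto.
    realize_alt; rewrite update_eq; [| assumption].
    now rewrite (update_off_branch f j y br _ _ (proj2 Hj) H) by (simpl; auto).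
  - pose proof (realizes_in _ _ _ Hbr H) as [y [Hy Hb]].
    apply (child_by_fresh [PR i a j; PF j b] _ _ _ j y); simpl; auto.
    realize_alt; rewrite update_eq; [| assumption].
    now rewrite (update_off_branch f j y br _ _ (proj2 Hj) H) by (simpl; auto).
  - premise Hbr H. premise Hbr Hr.
    apply (child_by_same [PF j (FNeg b)]); simpl; auto. realize_alt. eauto.
Qed.

Lemma rule_app_sound sys br alts f :
  (sys = Vc -> VC_model M) -> rule_app sys br alts -> realizes f br ->
  realizes_some_child br alts f.
Proof.
  intros HVC Hr Hbr.
  destruct Hr as [ | | | | | | | | | |
                 | _ i a _ | _ i j k a b Hr Hk
                 | e i j a Hr | e i j k a b H Hr Hk | e i j a H Hn Hr | e i _
                 | e i j a b H Hr | e i j k a b H Hr Hk];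
    try (apply basic_rule_sound; [econstructor; eassumption | exact Hbr]);
    try specialize (HVC e).
  - destruct (classic (sat M (f i) a)).
    + apply (child_by_same [PF i a]); simpl; auto. now realize_alt.
    + apply (child_by_same [PF i (FNeg a)]); simpl; auto. now realize_alt.
  - premise Hbr Hr. destruct (pred_eq_or_differ (truth a) (truth b)) as [E | [z Hz]].
    + apply (child_by_same [PR i b j]); simpl; auto. realize_alt. now rewrite <- E.
    + destruct (classic (sat M z a)).
      * apply (child_by_fresh [PF k a; PF k (FNeg b)] _ _ _ k z); simpl; auto.
        realize_alt; rewrite update_eq; tauto.
      * apply (child_by_fresh [PF k (FNeg a); PF k b] _ _ _ k z); simpl; auto.
        realize_alt; rewrite update_eq; tauto.
  - premise Hbr Hr. apply (child_by_same [PF j a]); simpl; auto.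
    realize_alt. eapply vc_R_sub_antecedent; eauto.
  - pose proof (realizes_in _ _ _ Hbr Hr) as Hr'. premise Hbr H.
    destruct (vc_R_nonempty HVC _ _ _ _ Hr' H) as [y Hy].
    apply (child_by_fresh [PR i b k] _ _ _ k y); simpl; auto.
    realize_alt.
    now rewrite update_eq, (update_off_branch f k y br _ _ (proj2 Hk) Hr) by (simpl; auto).
  - premise Hbr H. premise Hbr Hn. premise Hbr Hr.
    apply vc_R_top_self in Hr; auto. rewrite Hr in Hn. contradiction.
  - apply (child_by_same [PR i FTop i]); simpl; auto.
    realize_alt. now apply vc_R_top_refl.
  - premise Hbr H. premise Hbr Hr. apply (child_by_same [PR i (FAnd a b) j]); simpl; auto.
    realize_alt. now apply vc_R_and_intro.
  - premise Hbr H. premise Hbr Hr. premise Hbr Hk.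
    destruct (vc_R_and_elim HVC _ _ _ _ _ Hr H Hk) as [Hrk Hb].
    apply (child_by_same [PF k b; PR i a k]); simpl; auto. now realize_alt.
Qed.

(* On a rooted nonempty branch a fresh index is never 1, so the root world x0
   survives every update. *)
Definition rooted (br : list pform) : Prop := br = [] \/ on_branch 1 br.

Definition realizable_at (x0 : U M) (br : list pform) : Prop :=
  exists f, f 1 = x0 /\ realizes f br.

Lemma realizable_not_closed x0 br : realizable_at x0 br -> ~ branch_closed br.
Proof.
  intros [f [_ Hbr]] [(i & c & H & Hn) | (i & H)].
  - premise Hbr H. premise Hbr Hn. auto.
  - premise Hbr H. exact H.
Qed.

Lemma closes_unrealizable sys A x0 br :
  (sys = Vc -> VC_model M) ->
  (forall a, In a A -> exists t, a = PF 1 t /\ sat M x0 t) ->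
  closes sys A br -> rooted br -> ~ realizable_at x0 br.
Proof.
  intros HVC HA Hc. induction Hc as [br Hcl | br a Ha Hc IH | br alts Hr Hc IH];
    intros Hroot Hrl.
  - exact (realizable_not_closed x0 br Hrl Hcl).
  - destruct (HA a Ha) as [t [-> Ht]]. destruct Hrl as [f [Hf Hbr]].
    apply IH.
    + right. left. reflexivity.
    + exists f. split; [| constructor; simpl; rewrite ?Hf]; auto.
  - destruct Hroot as [-> | H1]; [exact (rule_app_nil _ _ Hr) |].
    destruct Hrl as [f [Hf Hbr]].
    destruct (rule_app_sound sys br alts f HVC Hr Hbr) as (alt & f' & Hin & Hbr' & Hagree).
    apply (IH alt Hin).
    + right. now apply on_branch_app.
    + exists f'. rewrite Hagree; auto.
Qed.

Lemma no_closed_tableau sys thetas :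
  (sys = Vc -> VC_model M) -> satisfiable_in M thetas ->
  ~ closed_tableau_exists sys (assumptions thetas).
Proof.
  intros HVC [x0 Hx0] Hc.
  refine (closes_unrealizable sys _ x0 [] HVC _ Hc (or_introl eq_refl) _).
  - intros a Ha. apply in_map_iff in Ha as [t [<- Ht]]. eauto.
  - exists (fun _ => x0). split; [reflexivity | constructor].
Qed.

End Soundness.

Theorem mainTheorem8 :
  (forall (thetas : list form),
     (exists M : SegModel, satisfiable_in M thetas) ->
     ~ closed_tableau_exists Ck (assumptions thetas) /\
     ~ closed_tableau_exists CK (assumptions thetas)) /\
  (forall (thetas : list form),
     (exists M : SegModel, VC_model M /\ satisfiable_in M thetas) ->
     ~ closed_tableau_exists Vc (assumptions thetas)).
Proof.
  split.
  - intros thetas [M Hsat]. split; apply (no_closed_tableau M); easy.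
  - intros thetas [M [HVC Hsat]]. now apply (no_closed_tableau M).
Qed.
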